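(* Let $L:\mathbb{R}^{n\times d}\to\mathbb{R}$ be a topological loss $L(X)=\ell(\mathrm{Dgm}(X))$, assumed lower bounded and locally semi-convex. Let $\tilde X:[0,\infty)\to\mathbb{R}^{n\times d}$ solve $$\frac{\mathrm{d}\tilde X}{\mathrm{d}t}=-\tilde v_t(\tilde X(t)),\qquad \tilde X(0)=X_0,$$ where, for each $t$, $\tilde v_t:\mathbb{R}^d\to\mathbb{R}^d$ is the diffeomorphic interpolation of the vanilla gradient $\nabla L(\tilde X(t))$ (defined in the context), and $\tilde v_t(\tilde X(t))$ is the $n\times d$ matrix whose $i$-th row is $\tilde v_t(\tilde X(t)_i)$. Then for each $t\ge 0$, $$\frac{\mathrm{d}L(\tilde X(t))}{\mathrm{d}t}=-\|\nabla L(\tilde X(t))\|^2\le 0.$$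
   Context: For a point cloud $X=(x_1,\dots,x_n)\in\mathbb{R}^{n\times d}$, $\mathrm{Dgm}(X)$ is the persistence diagram of the Vietoris–Rips filtration of $X$, in which a simplex $\{x_{i_1},\dots,x_{i_p}\}$ is present at parameter $t$ iff all pairwise distances $\|x_{i_j}-x_{i_{j'}}\|\le t$. It is a finite multiset of points $(b,d)$ with $b\le d$, and $\ell$ is a real-valued function of persistence diagrams. $\nabla L(X)\in\mathbb{R}^{n\times d}$ is the gradient of $L$ at $X$, with $i$-th row $\nabla L(X)_i$. The paper treats $\nabla L$ as existing along the trajectory. Diffeomorphic interpolation: given $X=(x_1,\dots,x_n)$, let $I=\{i:\nabla L(X)_i\neq 0\}$ and $a_i=\nabla L(X)_i$ for $i\in I$. Let $\rho_\sigma(u)=e^{-u^2/(2\sigma^2)}$ for a fixed bandwidth $\sigma>0$. Let $\mathbf{K}$ be the block matrix $(\rho_\sigma(\|x_i-x_j\|)I_d)_{i,j\in I}$ and $\alpha=\mathbf{K}^{-1}a$, where $a=(a_i)_{i\in I}$. Define $$\tilde v(x)=\sum_{i\in I}\rho_\sigma(\|x-x_i\|)\,\alpha_i.$$ This is the minimal-norm element of the vector-valued Gaussian RKHS with $\tilde v(x_i)=a_i$ for all $i\in I$. At time $t$, $\tilde v_t$ is this construction applied to $X=\tilde X(t)$. *)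

From HB Require Import structures.
From mathcomp Require Import all_boot all_order all_algebra.
From mathcomp Require Import all_classical all_reals all_analysis.
Set Implicit Arguments. Unset Strict Implicit. Unset Printing Implicit Defensive.
Import Order.TTheory GRing.Theory Num.Theory.
Import numFieldNormedType.Exports.
Local Open Scope ring_scope.
Local Open Scope classical_set_scope.

Section Defs.
Variable R : realType.

Definition sqnorm {m k : nat} (M : 'M[R]_(m, k)) : R :=
  \sum_(i < m) \sum_(j < k) M i j ^+ 2.
Definition enorm {m k : nat} (M : 'M[R]_(m, k)) : R := Num.sqrt (sqnorm M).
Definition frob_dot {m k : nat} (M N : 'M[R]_(m, k)) : R :=
  \sum_(i < m) \sum_(j < k) M i j * N i j.
Definition edist {d : nat} (x y : 'rV[R]_d) : R := enorm (x - y).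

Section VR.
Variables (n d : nat).
Local Notation Simp := {set 'I_n}.
Local Notation N := #|{: Simp}|.

Definition vr_filt (X : 'M[R]_(n, d)) (S : Simp) : R :=
  \big[Num.max/0]_(i in S) \big[Num.max/0]_(j in S) edist (row i X) (row j X).

Definition simp_of (p : 'I_N) : Simp := enum_val p.

(* boundary over F_2, chains are row vectors indexed by enum_val : 'I_N -> Simp *)
Definition vr_boundary : 'M['F_2]_N :=
  \matrix_(p, q) ((simp_of q \subset simp_of p)
                  && (#|simp_of p| == #|simp_of q|.+1)
                  && (0 < #|simp_of q|)%N)%:R.

(* row space = k-chains of the VR complex at parameter t *)
Definition vr_chains (X : 'M[R]_(n, d)) (k : nat) (t : R) : 'M['F_2]_N :=
  \matrix_(p, q) ((p == q) && (#|simp_of p| == k.+1)%N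
                  && (vr_filt X (simp_of p) <= t))%:R.

Definition vr_cycles X k t : 'M['F_2]_N := (vr_chains X k t :&: kermx vr_boundary)%MS.
Definition vr_bdries X k t : 'M['F_2]_N := (vr_chains X k.+1 t *m vr_boundary)%MS.

(* persistent Betti number: rank of H_k(K_s) -> H_k(K_t), s <= t *)
Definition pbetti X k (s t : R) : nat :=
  (\rank (vr_cycles X k s) - \rank (vr_cycles X k s :&: vr_bdries X k t)%MS)%N.

(* largest critical value strictly below x (or -1 < 0 if none: empty complex) *)
Definition vr_prev X (x : R) : R :=
  \big[Num.max/(-1)]_(S : Simp | vr_filt X S < x) vr_filt X S.

Definition is_crit X (x : R) : bool := [exists S : Simp, vr_filt X S == x].

(* multiplicity of the point (b, dth) in the degree-k diagram (finite points, b < dth) *)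
Definition vr_mult X (k : nat) (b dth : R) : nat :=
  if (b < dth) && is_crit X b then
    let b' := vr_prev X b in let d' := vr_prev X dth in
    ((pbetti X k b d' + pbetti X k b' dth) - (pbetti X k b' d' + pbetti X k b dth))%N
  else 0%N.

End VR.

(* a persistence diagram (all homology degrees): multiplicity of each point (b,d) *)
Definition diagram := nat -> R -> R -> nat.
Definition Dgm {n d : nat} (X : 'M[R]_(n, d)) : diagram := vr_mult X.

Definition lower_bounded {n d : nat} (L : 'M[R]_(n, d) -> R) :=
  exists c : R, forall X, c <= L X.

Definition locally_semiconvex {n d : nat} (L : 'M[R]_(n, d) -> R) :=
  forall X0, exists r : R, 0 < r /\ exists lam : R, 0 <= lam /\
    forall X Y th, enorm (X - X0) < r -> enorm (Y - X0) < r -> 0 <= th <= 1 ->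
      let f := fun Z => L Z + lam / 2 * sqnorm Z in
      f (th *: X + (1 - th) *: Y) <= th * f X + (1 - th) * f Y.

(* gradient: the matrix of partial derivatives (meaningful where L is differentiable) *)
Definition grad {n d : nat} (L : 'M[R]_(n, d) -> R) (X : 'M[R]_(n, d)) : 'M[R]_(n, d) :=
  \matrix_(i, j) ('d L X (delta_mx i j : 'M[R]_(n, d))).

Definition rho (sigma u : R) : R := expR (- (u ^+ 2) / (2 * sigma ^+ 2)).

Section Interp.
Variables (n d : nat) (sigma : R) (X G : 'M[R]_(n, d)).
Definition Iset : {set 'I_n} := [set i | row i G != 0].
Local Notation m := #|Iset|.
Definition Ie (i : 'I_m) : 'I_n := enum_val (A := Iset) i.
Definition Kmat : 'M[R]_(\sum_(i < m) d, \sum_(j < m) d) :=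
  \mxblock_(i < m, j < m)
     ((rho sigma (edist (row (Ie i) X) (row (Ie j) X)))%:M : 'M[R]_d).
Definition avec : 'M[R]_(\sum_(i < m) d, 1) :=
  \mxcol_(i < m) ((row (Ie i) G)^T : 'M[R]_(d, 1)).
Definition alpha : 'M[R]_(\sum_(i < m) d, 1) := invmx Kmat *m avec.
Definition vtilde (x : 'rV[R]_d) : 'rV[R]_d :=
  \sum_(i < m) rho sigma (edist x (row (Ie i) X)) *: (submxcol alpha i)^T.
Definition vtilde_pts : 'M[R]_(n, d) := \matrix_(i, k) vtilde (row i X) 0 k.
End Interp.

(* derivative relative to the half-line [0, +oo): two-sided for t > 0, right one at t = 0 *)
Definition has_deriv_half {V : normedModType R} (f : R -> V) (t : R) (v : V) :=
  (fun h : R => h^-1 *: (f (t + h) - f t)) @ within [set h | 0 <= t + h] (0^') --> v.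

End Defs.

(* Since K alpha = a, the interpolant vtilde reproduces the gradient row
   at every point x_i where that row is nonzero, and the remaining rows of the
   gradient vanish; hence <vtilde(X), grad L(X)> = |grad L(X)|^2.  The chain
   rule for the derivative relative to [0, +oo) then gives
   d/dt L(X t) = - 'd L (vtilde(X t)) = - |grad L(X t)|^2. *)

From HB Require Import structures.
From mathcomp Require Import all_boot all_order all_algebra.
From mathcomp Require Import all_classical all_reals all_analysis.
Import Order.TTheory GRing.Theory Num.Theory.
Import numFieldNormedType.Exports.
Local Open Scope ring_scope.
Local Open Scope classical_set_scope.
Set Implicit Arguments.
Unset Strict Implicit.

Section OneSidedDerivative.
Variables (R : realType) (V W : normedModType R).

Lemma scaled_littleo_cvg0 (A : set R) (e : V -> W) (F : R -> V) (v : V) :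
  (forall eps, 0 < eps -> \forall D \near (0 : V), `|e D| <= eps * `|D|) ->
  F @ within A 0^' --> v ->
  (fun h => h^-1 *: e (h *: F h)) @ within A 0^' --> (0 : W).
Proof.
move=> e_small Fv; set G := within A 0^' in Fv *.
have hF0 : (fun h => h *: F h) @ G --> (0 : V).
  rewrite -(scale0r v); apply: cvgZ => //.
  by apply: cvg_within_filter; apply: cvg_within_filter; exact: cvg_id.
have h_neq0 : \forall h \near G, h != 0.
  exact: (cvg_within _ (nbhs_dnbhs_neq (0 : R))).
apply/cvgr0Pnorm_le => eps eps0.
pose M := `|v| + 1.
have M0 : 0 < M by rewrite /M ltr_wpDl.
have F_bounded : \forall h \near G, `|F h| <= M.
  by apply: (@cvgr_norm_le _ _ _ G _ F v Fv M); rewrite /M ltrDl.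
have e_bounded : \forall h \near G, `|e (h *: F h)| <= eps / M * `|h *: F h|.
  exact: hF0 _ (e_small _ (divr_gt0 eps0 M0)).
near=> h.
have h0 : h != 0 by near: h.
have eh : `|e (h *: F h)| <= eps / M * `|h *: F h| by near: h.
have Fh : `|F h| <= M by near: h.
rewrite normrZ normfV ler_pdivrMl ?normr_gt0 //.
apply: (le_trans eh); rewrite normrZ mulrCA ler_wpM2l ?normr_ge0 //.
by rewrite mulrAC ler_pdivrMr // ler_wpM2l // ltW.
Unshelve. all: by end_near. Qed.

Lemma has_deriv_half_comp (f : V -> W) (x : R -> V) (t : R) (v : V) :
  differentiable f (x t) -> has_deriv_half x t v ->
  has_deriv_half (f \o x) t ('d f (x t) v).
Proof.
move=> df xv; rewrite /has_deriv_half.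
pose e D := f (D + x t) - (f (x t) + 'd f (x t) D).
have e_small : forall eps, 0 < eps -> \forall D \near (0 : V), `|e D| <= eps * `|D|.
  by move=> eps eps0; have /eqaddoP := diff_locally df; apply.
pose F h := h^-1 *: (x (t + h) - x t).
have -> : (fun h => h^-1 *: ((f \o x) (t + h) - (f \o x) t)) =
          (fun h => 'd f (x t) (F h) + h^-1 *: e (h *: F h)).
  apply/funext => h; have [->|h0] := eqVneq h 0.
    by rewrite /F invr0 !scale0r raddf0 addr0.
  rewrite /F scalerA mulfV // scale1r /e subrK linearZ /= -scalerDr.
  by congr (_ *: _); rewrite [RHS]addrC opprD addrA subrK.
rewrite -[X in _ --> X]addr0; apply: cvgD; last exact: scaled_littleo_cvg0 xv.
by apply: continuous_cvg; [exact: diff_continuous | exact: xv].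
Qed.

End OneSidedDerivative.

Section Interpolation.
Variables (R : realType) (n d : nat) (sigma : R) (X G : 'M[R]_(n, d)).
Hypothesis K_unit : Kmat sigma X G \in unitmx.

Lemma vtilde_interp (k : 'I_#|Iset G|) :
  vtilde sigma X G (row (Ie k) X) = row (Ie k) G.
Proof.
have /(congr1 (fun M => submxcol M k)) : Kmat sigma X G *m alpha sigma X G = avec G.
  by rewrite /alpha mulKVmx.
rewrite /avec mxcolK -(submxcolK (alpha sigma X G)) /Kmat mul_mxblock_mxrow mxcolK.
move=> /(congr1 trmx); rewrite trmxK => <-.
rewrite /vtilde linear_sum /=; apply: eq_bigr => j _.
by rewrite mul_scalar_mx linearZ.
Qed.

Lemma frob_dot_vtilde_pts : frob_dot (vtilde_pts sigma X G) G = sqnorm G.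
Proof.
apply: eq_bigr => i _; apply: eq_bigr => j _; rewrite expr2.
have [iI|iNI] := boolP (i \in Iset G).
  have := vtilde_interp (enum_rank_in iI i); rewrite /Ie enum_rankK_in // => vi.
  by rewrite mxE vi mxE.
have /eqP/matrixP/(_ 0 j) : row i G == 0 by move: iNI; rewrite inE negbK.
by rewrite !mxE => ->; rewrite !mulr0.
Qed.

End Interpolation.

Lemma diff_frob_dot_grad (R : realType) (n d : nat) (L : 'M[R]_(n, d) -> R)
    (X M : 'M[R]_(n, d)) :
  'd L X M = frob_dot M (grad L X).
Proof.
rewrite {1}(matrix_sum_delta M) raddf_sum; apply: eq_bigr => i _.
by rewrite raddf_sum; apply: eq_bigr => j _; rewrite /grad mxE; exact: linearZ.
Qed.

Lemma sqnorm_ge0 (R : realType) (m k : nat) (M : 'M[R]_(m, k)) : 0 <= sqnorm M.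
Proof. by apply: sumr_ge0 => i _; apply: sumr_ge0 => j _; exact: sqr_ge0. Qed.

Theorem proposition1 (R : realType) (n d : nat) (sigma : R) (ell : diagram R -> R)
    (Xt : R -> 'M[R]_(n, d)) (X0 : 'M[R]_(n, d)) :
  0 < sigma ->
  let L := fun X : 'M[R]_(n, d) => ell (Dgm X) in
  lower_bounded L ->
  locally_semiconvex L ->
  (* the gradient exists along the trajectory *)
  (forall t, 0 <= t -> differentiable L (Xt t)) ->
  (* the interpolation is well defined: the kernel block matrix is invertible *)
  (forall t, 0 <= t -> Kmat sigma (Xt t) (grad L (Xt t)) \in unitmx) ->
  Xt 0 = X0 ->
  (forall t, 0 <= t ->
     has_deriv_half Xt t (- vtilde_pts sigma (Xt t) (grad L (Xt t)))) ->
  forall t, 0 <= t ->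
    has_deriv_half (fun s => L (Xt s)) t (- sqnorm (grad L (Xt t))) /\
    - sqnorm (grad L (Xt t)) <= 0.
Proof.
move=> _ L _ _ L_diff K_unit _ Xt_deriv t t_ge0.
split; last by rewrite oppr_le0 sqnorm_ge0.
have := has_deriv_half_comp (L_diff t t_ge0) (Xt_deriv t t_ge0).
by rewrite linearN /= diff_frob_dot_grad frob_dot_vtilde_pts //; exact: K_unit.
Qed.
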